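(* For every finite multiset $\Gamma$ of formulas and every formula $\varphi$: if the sequent $\Gamma\Rightarrow\varphi$ is provable in $\mathsf{G4iSLt}$, then $\Gamma\models\varphi$, i.e. for every Kripke model $\mathcal M$ for $\mathsf{iSL}$ and every world $w$ of $\mathcal M$, if $\mathcal M,w\Vdash\psi$ for all $\psi\in\Gamma$ then $\mathcal M,w\Vdash\varphi$.
   Context: Formulas are built by the grammar $\varphi ::= p \mid \bot \mid \varphi\land\varphi \mid \varphi\lor\varphi \mid \varphi\to\varphi \mid \Box\varphi$, with $p$ ranging over a countably infinite set $\mathbb V$ of propositional variables. For a multiset $\Gamma$, $\Box\Gamma=\{\Box\psi:\psi\in\Gamma\}$; a boxed formula is one of the form $\Box\psi$. A Kripke model for $\mathsf{iSL}$ is a tuple $(W,\leq,R,I)$ with $W$ a non-empty set, $\leq,R\subseteq W\times W$, and $I:\mathbb V\to\mathcal P(W)$, such that: $\leq$ is reflexive and transitive; $R$ is transitive and converse well-founded (no infinite chain $w_0Rw_1Rw_2R\cdots$); $(\leq\circ R)\subseteq R$ (i.e. $w\leq u$ and $uRv$ imply $wRv$); $R\subseteq\ \leq$; and for all $p$, if $w\leq v$ and $w\in I(p)$ then $v\in I(p)$. Forcing: $w\Vdash p$ iff $w\in I(p)$; $w\Vdash\bot$ never; $w\Vdash\varphi\land\psi$ iff both; $w\Vdash\varphi\lor\psi$ iff at least one; $w\Vdash\varphi\to\psi$ iff for all $v\geq w$, $v\Vdash\varphi$ implies $v\Vdash\psi$; $w\Vdash\Box\varphi$ iff for all $v$ with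 $wRv$, $v\Vdash\varphi$. A sequent is $\Gamma\Rightarrow\chi$ with $\Gamma$ a finite multiset of formulas and $\chi$ a formula. The sequent calculus $\mathsf{G4iSLt}$ has the following rules, where $p$ is a propositional variable and $\Phi$ always denotes a multiset containing no boxed formula: (⊥L) $\bot,\Gamma\Rightarrow\chi$ (no premise); (IdP) $\Gamma,p\Rightarrow p$ (no premise); (∧L) from $\Gamma,\varphi,\psi\Rightarrow\chi$ infer $\Gamma,\varphi\land\psi\Rightarrow\chi$; (∧R) from $\Gamma\Rightarrow\varphi$ and $\Gamma\Rightarrow\psi$ infer $\Gamma\Rightarrow\varphi\land\psi$; (∨L) from $\Gamma,\varphi\Rightarrow\chi$ and $\Gamma,\psi\Rightarrow\chi$ infer $\Gamma,\varphi\lor\psi\Rightarrow\chi$; (∨R$_i$), $i\in\{1,2\}$: from $\Gamma\Rightarrow\varphi_i$ infer $\Gamma\Rightarrow\varphi_1\lor\varphi_2$; (p→L) from $\Gamma,p,\varphi\Rightarrow\chi$ infer $\Gamma,p,p\to\varphi\Rightarrow\chi$; (→R) from $\Gamma,\varphi\Rightarrow\psi$ infer $\Gamma\Rightarrow\varphi\to\psi$; (□→L) from $\Phi,\Gamma,\psi,\Box\varphi\Rightarrow\varphi$ and $\Phi,\Box\Gamma,\psi\Rightarrow\chi$ infer $\Phi,\Box\Gamma,\Box\varphi\to\psi\Rightarrow\chi$; (SLtR) from $\Phi,\Gamma,\Box\varphi\Rightarrow\varphi$ infer $\Phi,\Box\Gamma\Rightarrow\Box\varphi$; (∧→L) from $\Gamma,\varphi\to(\psi\to\chi)\Rightarrow\delta$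 infer $\Gamma,(\varphi\land\psi)\to\chi\Rightarrow\delta$; (∨→L) from $\Gamma,\varphi\to\chi,\psi\to\chi\Rightarrow\delta$ infer $\Gamma,(\varphi\lor\psi)\to\chi\Rightarrow\delta$; (→→L) from $\Gamma,\psi\to\chi\Rightarrow\varphi\to\psi$ and $\Gamma,\chi\Rightarrow\delta$ infer $\Gamma,(\varphi\to\psi)\to\chi\Rightarrow\delta$. A proof of a sequent $S$ is a finite tree of sequents with root $S$ in which each interior node together with its children forms an instance of a rule (conclusion, premises) and each leaf is the conclusion of a premise-free rule; $S$ is provable if it has a proof. *)

From Stdlib Require Import List Permutation.
Import ListNotations.

Inductive form : Type :=
| Var : nat -> form
| Bot : form
| And : form -> form -> form
| Or  : form -> form -> form
| Imp : form -> form -> form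
| Box : form -> form.

Definition is_boxed (A : form) : Prop :=
  match A with Box _ => True | _ => False end.

Definition no_boxed (Phi : list form) : Prop := forall A, In A Phi -> ~ is_boxed A.

Definition boxes (G : list form) : list form := map Box G.

(* A sequent Γ ⇒ χ has Γ a finite multiset, represented by a list;
   every rule may be applied to any list that is a permutation of the displayed
   context, so derivability only depends on the multiset. *)
Inductive G4iSLt : list form -> form -> Prop :=
| BotL : forall D G chi, Permutation D (Bot :: G) -> G4iSLt D chi
| IdP : forall D G p, Permutation D (Var p :: G) -> G4iSLt D (Var p)
| AndL : forall D G a b chi, Permutation D (And a b :: G) ->
    G4iSLt (a :: b :: G) chi -> G4iSLt D chi
| AndR : forall G a b, G4iSLt G a -> G4iSLt G b -> G4iSLt G (And a b)
| OrL : forall D G a b chi, Permutation D (Or a b :: G) ->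
    G4iSLt (a :: G) chi -> G4iSLt (b :: G) chi -> G4iSLt D chi
| OrR1 : forall G a b, G4iSLt G a -> G4iSLt G (Or a b)
| OrR2 : forall G a b, G4iSLt G b -> G4iSLt G (Or a b)
| PImpL : forall D G p a chi, Permutation D (Var p :: Imp (Var p) a :: G) ->
    G4iSLt (Var p :: a :: G) chi -> G4iSLt D chi
| ImpR : forall G a b, G4iSLt (a :: G) b -> G4iSLt G (Imp a b)
| BoxImpL : forall D Phi G a b chi, no_boxed Phi ->
    Permutation D (Phi ++ boxes G ++ [Imp (Box a) b]) ->
    G4iSLt (Phi ++ G ++ [b; Box a]) a ->
    G4iSLt (Phi ++ boxes G ++ [b]) chi ->
    G4iSLt D chi
| SLtR : forall D Phi G a, no_boxed Phi ->
    Permutation D (Phi ++ boxes G) ->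
    G4iSLt (Phi ++ G ++ [Box a]) a ->
    G4iSLt D (Box a)
| AndImpL : forall D G a b c d, Permutation D (Imp (And a b) c :: G) ->
    G4iSLt (Imp a (Imp b c) :: G) d -> G4iSLt D d
| OrImpL : forall D G a b c d, Permutation D (Imp (Or a b) c :: G) ->
    G4iSLt (Imp a c :: Imp b c :: G) d -> G4iSLt D d
| ImpImpL : forall D G a b c d, Permutation D (Imp (Imp a b) c :: G) ->
    G4iSLt (Imp b c :: G) (Imp a b) -> G4iSLt (c :: G) d -> G4iSLt D d.

Record kmodel : Type := {
  W : Type;
  W_inh : inhabited W;
  le : W -> W -> Prop;
  R : W -> W -> Prop;
  I : nat -> W -> Prop;
  le_refl : forall w, le w w;
  le_trans : forall u v w, le u v -> le v w -> le u w;
  R_trans : forall u v w, R u v -> R v w -> R u w;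
  R_cwf : ~ exists f : nat -> W, forall n, R (f n) (f (S n));
  le_R : forall w u v, le w u -> R u v -> R w v;
  R_le : forall w v, R w v -> le w v;
  I_mono : forall p w v, le w v -> I p w -> I p v
}.

Fixpoint forces (M : kmodel) (w : W M) (A : form) : Prop :=
  match A with
  | Var p => I M p w
  | Bot => False
  | And a b => forces M w a /\ forces M w b
  | Or a b => forces M w a \/ forces M w b
  | Imp a b => forall v, le M w v -> forces M v a -> forces M v b
  | Box a => forall v, R M w v -> forces M v a
  end.

Definition entails (G : list form) (A : form) : Prop :=
  forall (M : kmodel) (w : W M), (forall B, In B G -> forces M w B) -> forces M w A.

(* Three semantic facts carry the argument:
   - forcing is persistent along [le] (hence also along [R], as R ⊆ ≤);
   - since R is converse well-founded, one may do induction along R; this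
     yields the Löb principle: if every R-successor forcing □a forces a,
     then □a is forced (it validates the modal rules SLtR and □→L);
   - a world forcing Φ, □Γ makes Φ, Γ true at all its R-successors. *)
From Stdlib Require Import List Permutation Setoid.
From Stdlib Require Import Classical ClassicalEpsilon.
Import ListNotations.

(* A relation without infinite ascending chains has a well-founded converse.
   Classical: a non-accessible point always has a non-accessible successor. *)
Lemma no_ascending_chain_wf (T : Type) (r : T -> T -> Prop) :
  ~ (exists f : nat -> T, forall n, r (f n) (f (S n))) ->
  well_founded (fun u v => r v u).
Proof.
  intros no_chain x0. apply NNPP. intro not_acc0.
  set (Bad := {x : T | ~ Acc (fun u v => r v u) x}).
  assert (successor : forall x : Bad, {y : Bad | r (proj1_sig x) (proj1_sig y)}).
  { intros [x not_acc]. apply constructive_indefinite_description.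
    apply NNPP. intro all_acc. apply not_acc. constructor. intros y rxy.
    apply NNPP. intro not_acc_y. apply all_acc.
    exists (exist _ y not_acc_y). exact rxy. }
  set (chain := fix chain (n : nat) : Bad :=
    match n with O => exist _ x0 not_acc0 | S n => proj1_sig (successor (chain n)) end).
  apply no_chain. exists (fun n => proj1_sig (chain n)). intro n.
  exact (proj2_sig (successor (chain n))).
Qed.

Section Semantics.

Variable M : kmodel.

Lemma forces_persistent (A : form) :
  forall w v : W M, le M w v -> forces M w A -> forces M v A.
Proof.
  induction A as [p| |a IHa b IHb|a IHa b IHb|a _ b _|a _]; simpl; intros w v wv Hw.
  - exact (I_mono M p w v wv Hw).
  - exact Hw.
  - destruct Hw; split; eauto.
  - destruct Hw; [left | right]; eauto.
  - intros u vu. apply Hw. exact (le_trans M _ _ _ wv vu).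
  - intros u vu. apply Hw. exact (le_R M _ _ _ wv vu).
Qed.

Lemma R_converse_wf : well_founded (fun u v => R M v u).
Proof. exact (no_ascending_chain_wf _ _ (R_cwf M)). Qed.

(* Löb principle: the semantic content of the rules with □ a as new context. *)
Lemma forces_box_loeb (w : W M) (a : form) :
  (forall v, R M w v -> forces M v (Box a) -> forces M v a) ->
  forces M w (Box a).
Proof.
  intros loeb_step v.
  induction v as [v IH] using (well_founded_ind R_converse_wf).
  intro wv. apply loeb_step; [exact wv|].
  intros u vu. apply IH; [exact vu | exact (R_trans M _ _ _ wv vu)].
Qed.

Definition forces_all (w : W M) (G : list form) : Prop :=
  forall B, In B G -> forces M w B.

Lemma forces_all_perm (w : W M) (D G : list form) :
  Permutation D G -> forces_all w D -> forces_all w G.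
Proof.
  intros DG HD B HB. apply HD. exact (Permutation_in _ (Permutation_sym DG) HB).
Qed.

Lemma forces_all_nil (w : W M) : forces_all w [] <-> True.
Proof. split; [trivial | intros _ B []]. Qed.

Lemma forces_all_cons (w : W M) (B : form) (G : list form) :
  forces_all w (B :: G) <-> forces M w B /\ forces_all w G.
Proof.
  split.
  - intro H. split; [apply H; left; reflexivity | intros C HC; apply H; right; exact HC].
  - intros [HB HG] C [<- | HC]; [exact HB | exact (HG C HC)].
Qed.

Lemma forces_all_app (w : W M) (G D : list form) :
  forces_all w (G ++ D) <-> forces_all w G /\ forces_all w D.
Proof.
  split.
  - intro H. split; intros C HC; apply H, in_app_iff; auto.
  - intros [HG HD] C HC. apply in_app_iff in HC as [HC | HC]; auto.
Qed.

Lemma forces_all_persistent (w v : W M) (G : list form) :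
  le M w v -> forces_all w G -> forces_all v G.
Proof. intros wv HG B HB. exact (forces_persistent B w v wv (HG B HB)). Qed.

Lemma forces_all_boxed_context (w v : W M) (Phi G : list form) :
  R M w v -> forces_all w (Phi ++ boxes G) -> forces_all v (Phi ++ G).
Proof.
  intros wv. rewrite !forces_all_app. intros [HPhi HG]. split.
  - exact (forces_all_persistent w v Phi (R_le M w v wv) HPhi).
  - intros B HB. apply (HG (Box B)); [exact (in_map Box G B HB) | exact wv].
Qed.

End Semantics.

Lemma entails_forces_all (G : list form) (A : form) :
  entails G A <-> forall M w, forces_all M w G -> forces M w A.
Proof. reflexivity. Qed.

Lemma entails_perm (D G : list form) (A : form) :
  Permutation D G -> entails G A -> entails D A.
Proof. intros DG HG M w HD. exact (HG M w (forces_all_perm M w D G DG HD)). Qed.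

Lemma sound_BotL (G : list form) (chi : form) : entails (Bot :: G) chi.
Proof. intros M w Hw. destruct (Hw Bot (or_introl eq_refl)). Qed.

Lemma sound_IdP (G : list form) (p : nat) : entails (Var p :: G) (Var p).
Proof. intros M w Hw. exact (Hw (Var p) (or_introl eq_refl)). Qed.

Lemma sound_AndL (G : list form) (a b chi : form) :
  entails (a :: b :: G) chi -> entails (And a b :: G) chi.
Proof.
  rewrite !entails_forces_all.
  intros prem M w Hw. apply prem. apply forces_all_cons in Hw as [[Ha Hb] HG].
  rewrite !forces_all_cons. auto.
Qed.

Lemma sound_AndR (G : list form) (a b : form) :
  entails G a -> entails G b -> entails G (And a b).
Proof.
  rewrite !entails_forces_all. intros prem1 prem2 M w Hw. split; auto. Qed.

Lemma sound_OrL (G : list form) (a b chi : form) :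
  entails (a :: G) chi -> entails (b :: G) chi -> entails (Or a b :: G) chi.
Proof.
  rewrite !entails_forces_all.
  intros prem1 prem2 M w Hw. apply forces_all_cons in Hw as [[Ha | Hb] HG].
  - apply prem1. rewrite forces_all_cons. auto.
  - apply prem2. rewrite forces_all_cons. auto.
Qed.

Lemma sound_OrR1 (G : list form) (a b : form) : entails G a -> entails G (Or a b).
Proof.
  rewrite !entails_forces_all. intros prem M w Hw. left. auto. Qed.

Lemma sound_OrR2 (G : list form) (a b : form) : entails G b -> entails G (Or a b).
Proof.
  rewrite !entails_forces_all. intros prem M w Hw. right. auto. Qed.

Lemma sound_PImpL (G : list form) (p : nat) (a chi : form) :
  entails (Var p :: a :: G) chi -> entails (Var p :: Imp (Var p) a :: G) chi.
Proof.
  rewrite !entails_forces_all.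
  intros prem M w Hw. apply prem.
  rewrite !forces_all_cons in Hw |- *. destruct Hw as [Hp [Hpa HG]].
  repeat split; auto. exact (Hpa w (le_refl M w) Hp).
Qed.

Lemma sound_ImpR (G : list form) (a b : form) :
  entails (a :: G) b -> entails G (Imp a b).
Proof.
  rewrite !entails_forces_all.
  intros prem M w Hw v wv Ha. apply prem. rewrite forces_all_cons.
  split; [exact Ha | exact (forces_all_persistent M w v G wv Hw)].
Qed.

Lemma sound_AndImpL (G : list form) (a b c d : form) :
  entails (Imp a (Imp b c) :: G) d -> entails (Imp (And a b) c :: G) d.
Proof.
  rewrite !entails_forces_all.
  intros prem M w Hw. apply prem.
  rewrite !forces_all_cons in Hw |- *. destruct Hw as [Habc HG]. split; [|exact HG].
  intros v wv Ha u vu Hb. apply Habc; [exact (le_trans M _ _ _ wv vu)|].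
  split; [exact (forces_persistent M a v u vu Ha) | exact Hb].
Qed.

Lemma sound_OrImpL (G : list form) (a b c d : form) :
  entails (Imp a c :: Imp b c :: G) d -> entails (Imp (Or a b) c :: G) d.
Proof.
  rewrite !entails_forces_all.
  intros prem M w Hw. apply prem.
  apply forces_all_cons in Hw as [Habc HG]. rewrite !forces_all_cons.
  split; [|split; [|exact HG]]; intros v wv Hv; apply Habc; simpl; auto.
Qed.

Lemma sound_ImpImpL (G : list form) (a b c d : form) :
  entails (Imp b c :: G) (Imp a b) -> entails (c :: G) d ->
  entails (Imp (Imp a b) c :: G) d.
Proof.
  rewrite !entails_forces_all.
  intros prem1 prem2 M w Hw. apply forces_all_cons in Hw as [Habc HG].
  (* b → c holds at w: b persists, so b gives a → b *)
  assert (Hbc : forces M w (Imp b c)).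
  { intros v wv Hb. apply Habc; [exact wv|].
    intros u vu _. exact (forces_persistent M b v u vu Hb). }
  assert (Hab : forces M w (Imp a b)) by (apply prem1; rewrite forces_all_cons; auto).
  apply prem2. rewrite forces_all_cons. split; [|exact HG].
  exact (Habc w (le_refl M w) Hab).
Qed.

Lemma sound_SLtR (Phi G : list form) (a : form) :
  entails (Phi ++ G ++ [Box a]) a -> entails (Phi ++ boxes G) (Box a).
Proof.
  rewrite !entails_forces_all.
  intros prem M w Hw. apply forces_box_loeb. intros v wv Hboxa. apply prem.
  pose proof (forces_all_boxed_context M w v Phi G wv Hw) as Hv.
  rewrite app_assoc, forces_all_app, forces_all_cons, forces_all_nil. auto.
Qed.

(* The rule □→L: □a is established at w by the Löb principle, using the
   first premise at R-successors, after which b holds at w. *)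
Lemma sound_BoxImpL (Phi G : list form) (a b chi : form) :
  entails (Phi ++ G ++ [b; Box a]) a ->
  entails (Phi ++ boxes G ++ [b]) chi ->
  entails (Phi ++ boxes G ++ [Imp (Box a) b]) chi.
Proof.
  rewrite !entails_forces_all.
  intros prem1 prem2 M w Hw.
  rewrite app_assoc, forces_all_app, forces_all_cons in Hw.
  destruct Hw as [Hctx [Hboxab _]].
  assert (Hboxa : forces M w (Box a)).
  { apply forces_box_loeb. intros v wv Hboxa. apply prem1.
    pose proof (forces_all_boxed_context M w v Phi G wv Hctx) as Hv.
    rewrite app_assoc, forces_all_app, !forces_all_cons, forces_all_nil.
    repeat split; auto. exact (Hboxab v (R_le M w v wv) Hboxa). }
  apply prem2. rewrite app_assoc, forces_all_app, forces_all_cons, forces_all_nil.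
  repeat split; [exact Hctx | exact (Hboxab w (le_refl M w) Hboxa)].
Qed.

Theorem mainTheorem4 : forall (G : list form) (phi : form),
  G4iSLt G phi -> entails G phi.
Proof.
  induction 1; try (eapply entails_perm; [eassumption|]).
  - apply sound_BotL.
  - apply sound_IdP.
  - apply sound_AndL; assumption.
  - apply sound_AndR; assumption.
  - apply sound_OrL; assumption.
  - apply sound_OrR1; assumption.
  - apply sound_OrR2; assumption.
  - apply sound_PImpL; assumption.
  - apply sound_ImpR; assumption.
  - apply sound_BoxImpL; assumption.
  - apply sound_SLtR; assumption.
  - apply sound_AndImpL; assumption.
  - apply sound_OrImpL; assumption.
  - apply sound_ImpImpL; assumption.
Qed.
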